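(* Let $P$ be a continuous poset with $p\not\ll p$ for all $p\in P$, and let $M$ be a persistence module over $P$. Then (i) $M$ is not lower semi-continuous if $\mathrm{supp}\,M$ has a minimal element with respect to the way-below relation; (ii) $M$ is not upper semi-continuous if $\mathrm{supp}\,M$ has a maximal element with respect to the way-below relation. In particular, (iii) a nonzero finitely generated persistence module is not lower semi-continuous, and (iv) a nonzero finitely co-generated persistence module is not upper semi-continuous.
   Context: Let $P$ be a poset (as a category, $p\to q$ iff $p\le q$). A subset is directed if nonempty and any two elements have an upper bound in it. $x\ll y$ means: for every directed $D$ whose supremum exists with $y\le\sup D$, some $d\in D$ satisfies $x\le d$. $P$ is continuous if for each $p$ the set $\{x:x\ll p\}$ is directed with supremum $p$. An element $p$ is minimal (resp. maximal) in $S\subseteq P$ with respect to the way-below relation if $p\in S$ and $S\cap\{x:x\ll p\}\subseteq\{p\}$ (resp. $S\cap\{x:p\ll x\}\subseteq\{p\}$). $k$ is a commutative ring with unity; persistence modules are functors from $P$ to $k$-modules; $\mathrm{supp}\,M=\{p:M_p\ne0\}$. $k[U_x]$, $k[D_x]$ are indicator modules of $U_x=\{y\ge x\}$, $D_x=\{y\le x\}$ ($k$ on the set, $0$ elsewhere, identity maps inside). $M$ is finitely generated if there is an epimorphism onto $M$ from a finite direct sum of modules $k[U_x]$, and finitely co-generated if there is a monomorphism from $M$ into a finite direct sum of modules $k[D_x]$. $\underline M_p=\varprojlim_{x\gg p}M_x$, $\overline M_p=\varinjlim_{x\ll p}M_x$; $M$ is upper (resp. lower) semi-continuous if the canonical morphism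 $M\to\underline M$ (resp. $\overline M\to M$) is an isomorphism. *)

From HB Require Import structures.
From mathcomp Require Import all_boot all_order all_algebra.
Set Implicit Arguments. Unset Strict Implicit. Unset Printing Implicit Defensive.
Import Order.TTheory GRing.Theory.
Local Open Scope ring_scope.

Section Posets.
Context {d : Order.disp_t} {P : porderType d}.

Definition directed (D : P -> Prop) : Prop :=
  (exists x, D x) /\
  (forall a b, D a -> D b -> exists c, [/\ D c, (a <= c)%O & (b <= c)%O]).

Definition is_sup (D : P -> Prop) (s : P) : Prop :=
  (forall x, D x -> (x <= s)%O) /\
  (forall u, (forall x, D x -> (x <= u)%O) -> (s <= u)%O).

Definition way_below (x y : P) : Prop :=
  forall (D : P -> Prop) (s : P), directed D -> is_sup D s -> (y <= s)%O ->
    exists2 e, D e & (x <= e)%O.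

Definition continuous_poset : Prop :=
  forall p, directed (fun x => way_below x p) /\ is_sup (fun x => way_below x p) p.

Definition wb_minimal (S : P -> Prop) (p : P) : Prop :=
  S p /\ (forall x, S x -> way_below x p -> x = p).

Definition wb_maximal (S : P -> Prop) (p : P) : Prop :=
  S p /\ (forall x, S x -> way_below p x -> x = p).

Lemma way_below_le (x y : P) : way_below x y -> (x <= y)%O.
Proof.
move=> H; have [||e -> //] := H (fun z => z = y) y _ _ (lexx y).
- split; first by exists y.
  by move=> a b -> ->; exists y; split.
- by split=> [z -> //|u Hu]; apply: Hu.
Qed.

End Posets.

Section PMod.
Context {d : Order.disp_t} (P : porderType d) (R : comPzRingType).

Record pmod : Type := PMod {
  pobj : P -> lmodType R;
  pmap : forall p q : P, (p <= q)%O -> {linear pobj p -> pobj q};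
  pmap_id : forall (p : P) (h : (p <= p)%O) (v : pobj p), pmap h v = v;
  pmap_comp : forall (p q r : P) (h1 : (p <= q)%O) (h2 : (q <= r)%O)
      (h3 : (p <= r)%O) (v : pobj p), pmap h3 v = pmap h2 (pmap h1 v)
}.

Definition natural (M N : pmod) (eta : forall p, {linear pobj M p -> pobj N p}) : Prop :=
  forall (p q : P) (h : (p <= q)%O) (v : pobj M p),
    eta q (pmap M h v) = pmap N h (eta p v).

Definition supp (M : pmod) : P -> Prop := fun p => exists v : pobj M p, v != 0.

Definition nonzero_pmod (M : pmod) : Prop := exists p, supp M p.

(* Indicator module k[S] of a convex subset S of P: R on S, 0 elsewhere,
   identity maps inside S.  The value at p is the free module 'rV_(S p),
   i.e. R^1 if p \in S and R^0 = 0 otherwise; the structure maps are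
   right multiplication by the all-ones matrix. *)
Definition ind_obj (S : pred P) (p : P) : lmodType R := 'rV[R]_(S p).

Definition ind_map (S : pred P) (p q : P) (h : (p <= q)%O) :
  {linear ind_obj S p -> ind_obj S q} := mulmxr (const_mx 1).

Lemma ind_map_id (S : pred P) (p : P) (h : (p <= p)%O) (v : ind_obj S p) :
  ind_map S h v = v.
Proof.
rewrite /ind_map /ind_obj /= in v *.
case: (S p) v => v; last by rewrite [LHS]thinmx0 [RHS]thinmx0.
apply/rowP => j; rewrite !mxE big_ord1 mxE mulr1.
by rewrite (ord1 j); congr (v _ _); apply/val_inj; rewrite /= (ord1 j).
Qed.

Lemma const1_mul (a b c : bool) :
  b -> (const_mx 1 : 'M[R]_(a, b)) *m (const_mx 1 : 'M[R]_(b, c)) = const_mx 1.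
Proof.
case: b => // _; apply/matrixP => i j.
by rewrite !mxE big_ord1 !mxE mulr1.
Qed.

Lemma ind_map_comp (S : pred P)
  (conv : forall p q r : P, (p <= q)%O -> (q <= r)%O -> S p -> S r -> S q)
  (p q r : P) (h1 : (p <= q)%O) (h2 : (q <= r)%O) (h3 : (p <= r)%O)
  (v : ind_obj S p) : ind_map S h3 v = ind_map S h2 (ind_map S h1 v).
Proof.
rewrite /ind_map /ind_obj /= in v *. rewrite -mulmxA.
move: (conv p q r h1 h2) v.
case: (S q) => [_|]; first by move=> v; rewrite const1_mul.
case: (S p) => [|_ v]; last by rewrite [v]thinmx0 !mul0mx.
case: (S r) => [/(_ isT isT) //|_ v].
by rewrite [LHS]thinmx0 [RHS]thinmx0.
Qed.

Lemma up_conv (x : P) (p q r : P) : (p <= q)%O -> (q <= r)%O ->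
  (x <= p)%O -> (x <= r)%O -> (x <= q)%O.
Proof. by move=> pq _ xp _; apply: le_trans pq. Qed.

Lemma down_conv (x : P) (p q r : P) : (p <= q)%O -> (q <= r)%O ->
  (p <= x)%O -> (r <= x)%O -> (q <= x)%O.
Proof. by move=> _ qr _ rx; apply: le_trans rx. Qed.

Definition indU (x : P) : pmod :=
  @PMod (ind_obj (fun y => (x <= y)%O)) (@ind_map _)
    (@ind_map_id _) (@ind_map_comp _ (@up_conv x)).

Definition indD (x : P) : pmod :=
  @PMod (ind_obj (fun y => (y <= x)%O)) (@ind_map _)
    (@ind_map_id _) (@ind_map_comp _ (@down_conv x)).

(* M is finitely generated: an epimorphism  (+)_{i<n} k[U_{x_i}] -> M.
   A morphism out of the finite direct sum is a family of morphisms
   f_i : k[U_{x_i}] -> M, the induced map being (v_i)_i |-> \sum_i f_i v_i;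
   epimorphisms of persistence modules are the pointwise surjective ones. *)
Definition fin_gen (M : pmod) : Prop :=
  exists (n : nat) (xs : 'I_n -> P)
         (f : forall (i : 'I_n) (p : P), {linear pobj (indU (xs i)) p -> pobj M p}),
    (forall i, natural (f i)) /\
    (forall (p : P) (m : pobj M p),
        exists v : forall i : 'I_n, pobj (indU (xs i)) p,
          m = \sum_(i < n) f i p (v i)).

(* M is finitely co-generated: a monomorphism M -> (+)_{i<n} k[D_{x_i}].
   A morphism into the finite direct sum (= product) is a family
   g_i : M -> k[D_{x_i}]; monomorphisms are the pointwise injective ones. *)
Definition fin_cogen (M : pmod) : Prop :=
  exists (n : nat) (xs : 'I_n -> P)
         (g : forall (i : 'I_n) (p : P), {linear pobj M p -> pobj (indD (xs i)) p}),
    (forall i, natural (g i)) /\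
    (forall (p : P) (m : pobj M p), (forall i, g i p m = 0) -> m = 0).

(* Upper semi-continuity: for every p, the canonical morphism
   M_p -> lim_{x >> p} M_x is an isomorphism, i.e. the cone
   (M_p, M(p <= x))_{x >> p} is a limit cone of the diagram
   {x | p << x} -> R-Mod (full subposet). *)
Definition upper_sc (M : pmod) : Prop :=
  forall (p : P) (N : lmodType R)
         (f : forall x : P, way_below p x -> {linear N -> pobj M x}),
    (forall (x y : P) (hx : way_below p x) (hy : way_below p y) (hxy : (x <= y)%O)
            (v : N), pmap M hxy (f x hx v) = f y hy v) ->
    exists g : {linear N -> pobj M p},
      (forall (x : P) (hx : way_below p x) (v : N),
          pmap M (way_below_le hx) (g v) = f x hx v) /\
      (forall g' : {linear N -> pobj M p},
          (forall (x : P) (hx : way_below p x) (v : N),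
              pmap M (way_below_le hx) (g' v) = f x hx v) ->
          forall v, g' v = g v).

(* Lower semi-continuity: for every p, the canonical morphism
   colim_{x << p} M_x -> M_p is an isomorphism, i.e. the cocone
   (M_p, M(x <= p))_{x << p} is a colimit cocone. *)
Definition lower_sc (M : pmod) : Prop :=
  forall (p : P) (N : lmodType R)
         (f : forall x : P, way_below x p -> {linear pobj M x -> N}),
    (forall (x y : P) (hx : way_below x p) (hy : way_below y p) (hxy : (x <= y)%O)
            (v : pobj M x), f y hy (pmap M hxy v) = f x hx v) ->
    exists g : {linear pobj M p -> N},
      (forall (x : P) (hx : way_below x p) (v : pobj M x),
          g (pmap M (way_below_le hx) v) = f x hx v) /\
      (forall g' : {linear pobj M p -> N},
          (forall (x : P) (hx : way_below x p) (v : pobj M x),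
              g' (pmap M (way_below_le hx) v) = f x hx v) ->
          forall v, g' v = g v).

End PMod.

(* If M vanishes at every x << p, the identity and the zero map of M_p both
   factor the zero cocone (M_x -> M_p)_{x << p}; uniqueness of the factorisation
   for a lower semi-continuous M forces M_p = 0.  At a way-below minimal point p
   of supp M the module does vanish below p, because p is not way below itself;
   this gives (i), and (ii) is dual.  For (iii), every point of supp M lies above
   one of the finitely many generators in supp M; a minimal generator among those
   is then minimal in supp M, a fortiori way-below minimal.  (iv) is dual. *)
From Pilot Require Import Defs.
From mathcomp Require Import all_boot all_order all_algebra.
From Stdlib Require Import Classical_Prop.
Set Implicit Arguments. Unset Strict Implicit. Unset Printing Implicit Defensive.
Import Order.TTheory GRing.Theory.
Local Open Scope ring_scope.

Lemma fin_strict_minimal (I : finType) (S : I -> Prop) (r : rel I) :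
  irreflexive r -> transitive r -> (exists i, S i) ->
  exists2 j, S j & forall i, S i -> ~~ r i j.
Proof.
move=> irr tr [i Si].
suff: forall n i, S i -> (#|[pred k | r k i]| < n)%N ->
    exists2 j, S j & forall i, S i -> ~~ r i j.
  by move/(_ _ i Si (ltnSn _)).
elim=> // n IH {}i {}Si lt_n.
case: (classic (exists2 k, S k & r k i)) => [[k Sk rki]|no_below].
  apply: (IH k Sk); rewrite -ltnS (leq_trans _ lt_n) // ltnS proper_card //.
  apply/properP; split; first by apply/subsetP => l; rewrite !inE => /tr; apply.
  by exists k; rewrite !inE ?irr.
by exists i => // k Sk; apply/negP => rki; apply: no_below; exists k.
Qed.

Section RowConst.
Variable R : pzRingType.

Lemma mulmx_const1_row1 (u : 'rV[R]_1) : u *m const_mx 1 = u.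
Proof.
apply/rowP => j; rewrite !mxE big_ord1 mxE mulr1 (ord1 j).
by congr (u _ _); apply/val_inj.
Qed.

Lemma row_const1_surj (a b : bool) : a ->
  forall v : 'rV[R]_b, exists u : 'rV[R]_a, v = u *m const_mx 1.
Proof.
case: a => // _; case: b => v; last by exists 0; rewrite thinmx0 [RHS]thinmx0.
by exists v; rewrite mulmx_const1_row1.
Qed.

Lemma row_const1_inj (a b : bool) : b ->
  injective (fun u : 'rV[R]_a => u *m (const_mx 1 : 'M[R]_(a, b))).
Proof.
case: b => // _; case: a => u u'; last by rewrite thinmx0 [u']thinmx0.
by rewrite /= !mulmx_const1_row1.
Qed.

End RowConst.

Section Modules.
Context {d : Order.disp_t} (P : porderType d) (R : comPzRingType).
Implicit Types (M : pmod P R) (p q x : P).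

Lemma notin_supp_eq0 M p : ~ supp M p -> forall v : pobj M p, v = 0.
Proof. by move=> Np v; case: (eqVneq v 0) => // nz_v; case: Np; exists v. Qed.

Lemma ind_obj_eq0 (S : pred P) p : ~~ S p -> forall v : ind_obj R S p, v = 0.
Proof. by rewrite /ind_obj => /negbTE -> v; apply: thinmx0. Qed.

Lemma lower_sc_vanish M p : lower_sc M ->
  (forall x, way_below x p -> forall v : pobj M x, v = 0) ->
  forall v : pobj M p, v = 0.
Proof.
move=> lsc vanish v.
have [g [_ g_uniq]] :=
  lsc p (pobj M p) (fun x _ => \0) (fun x y _ _ _ _ => erefl).
have factor (h : {linear pobj M p -> pobj M p}) : h v = g v.
  by apply: g_uniq => x hx w; rewrite (vanish x hx w) !linear0.
by rewrite -[LHS]/(idfun v) (factor idfun) -(factor \0).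
Qed.

Lemma upper_sc_vanish M p : upper_sc M ->
  (forall x, way_below p x -> forall v : pobj M x, v = 0) ->
  forall v : pobj M p, v = 0.
Proof.
move=> usc vanish v.
have [g [_ g_uniq]] := usc p (pobj M p) (fun x _ => \0)
  (fun x y _ hy _ w => vanish y hy _).
have factor (h : {linear pobj M p -> pobj M p}) : h v = g v.
  by apply: g_uniq => x hx w; apply: vanish.
by rewrite -[LHS]/(idfun v) (factor idfun) -(factor \0).
Qed.

Lemma wb_minimal_not_lower_sc M p : (forall x, ~ way_below x x) ->
  wb_minimal (supp M) p -> ~ lower_sc M.
Proof.
move=> wb_irr [[v nz_v] p_min] lsc; move/eqP: nz_v; apply.
apply: lower_sc_vanish => // x xp; apply: notin_supp_eq0 => supp_x.
by have eq_xp := p_min x supp_x xp; subst x; apply: wb_irr xp.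
Qed.

Lemma wb_maximal_not_upper_sc M p : (forall x, ~ way_below x x) ->
  wb_maximal (supp M) p -> ~ upper_sc M.
Proof.
move=> wb_irr [[v nz_v] p_max] usc; move/eqP: nz_v; apply.
apply: upper_sc_vanish => // x px; apply: notin_supp_eq0 => supp_x.
by have eq_xp := p_max x supp_x px; subst x; apply: wb_irr px.
Qed.

Lemma natural_indU_supp M x (f : forall p, {linear pobj (indU R x) p -> pobj M p})
  q (v : pobj (indU R x) q) :
  natural f -> f q v != 0 -> (x <= q)%O /\ supp M x.
Proof.
move=> f_nat nz_fv.
have xq : (x <= q)%O.
  apply: contraNT nz_fv => Nxq.
  by rewrite (@ind_obj_eq0 (fun y => (x <= y)%O) q Nxq v) linear0.
split=> //; have [u def_v] := row_const1_surj (lexx x) v; subst v.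
exists (f x u); apply: contraNneq nz_fv => fu0.
by rewrite -[u *m _]/(Defs.pmap (indU R x) xq u) f_nat fu0 linear0.
Qed.

Lemma natural_indD_supp M x (g : forall p, {linear pobj M p -> pobj (indD R x) p})
  q (m : pobj M q) :
  natural g -> g q m != 0 -> (q <= x)%O /\ supp M x.
Proof.
move=> g_nat nz_gm.
have qx : (q <= x)%O.
  apply: contraNT nz_gm => Nqx.
  by rewrite (@ind_obj_eq0 (fun y => (y <= x)%O) q Nqx (g q m)).
split=> //; exists (Defs.pmap M qx m); apply: contraNneq nz_gm => gm0.
have /= := g_nat q x qx m; rewrite gm0 linear0 => /esym.
rewrite -(mul0mx _ (const_mx 1 : 'M[R]_((q <= x)%O, (x <= x)%O))).
by move/(row_const1_inj (lexx x)) ->.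
Qed.

Lemma fin_gen_supp M : fin_gen M -> exists n (xs : 'I_n -> P),
  forall q, supp M q -> exists i, supp M (xs i) /\ (xs i <= q)%O.
Proof.
case=> n [xs [f [f_nat f_surj]]]; exists n, xs => q [m nz_m].
have [v def_m] := f_surj q m.
have [i nz_fv] : exists i, f i q (v i) != 0.
  apply: NNPP => all0; move: nz_m; rewrite def_m big1 ?eqxx // => i _.
  by case: (eqVneq (f i q (v i)) 0) => // nz; case: all0; exists i.
by exists i; have [] := natural_indU_supp (f_nat i) nz_fv.
Qed.

Lemma fin_cogen_supp M : fin_cogen M -> exists n (xs : 'I_n -> P),
  forall q, supp M q -> exists i, supp M (xs i) /\ (q <= xs i)%O.
Proof.
case=> n [xs [g [g_nat g_inj]]]; exists n, xs => q [m nz_m].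
have [i nz_gm] : exists i, g i q m != 0.
  apply: NNPP => all0; move: nz_m; rewrite (g_inj q m) ?eqxx // => i.
  by case: (eqVneq (g i q m) 0) => // nz; case: all0; exists i.
by exists i; have [] := natural_indD_supp (g_nat i) nz_gm.
Qed.

End Modules.

Lemma bounded_below_minimal {d : Order.disp_t} (P : porderType d)
  (S : P -> Prop) n (xs : 'I_n -> P) :
  (forall q, S q -> exists i, S (xs i) /\ (xs i <= q)%O) -> (exists q, S q) ->
  exists2 p, S p & forall x, S x -> (x <= p)%O -> x = p.
Proof.
move=> below [q Sq]; have [i [Sxi _]] := below q Sq.
have [j Sxj j_min] := @fin_strict_minimal _ (fun i => S (xs i))
  (fun a b => (xs a < xs b)%O) (fun a => ltxx (xs a))
  (fun b a c => @lt_trans _ _ (xs b) (xs a) (xs c)) (ex_intro _ i Sxi).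
exists (xs j) => // x Sx x_le; have [k [Sxk k_le]] := below x Sx.
have : (xs k <= xs j)%O := le_trans k_le x_le.
rewrite le_eqVlt (negbTE (j_min k Sxk)) orbF => /eqP eq_kj.
by apply/le_anti; rewrite x_le -eq_kj k_le.
Qed.

Section MinimalPoints.
Context {d : Order.disp_t} (P : porderType d).

Lemma bounded_below_wb_minimal (S : P -> Prop) n (xs : 'I_n -> P) :
  (forall q, S q -> exists i, S (xs i) /\ (xs i <= q)%O) -> (exists q, S q) ->
  exists p, wb_minimal S p.
Proof.
move=> below /(bounded_below_minimal below)[p Sp p_min].
by exists p; split=> // x Sx /way_below_le; apply: p_min.
Qed.

Lemma bounded_above_wb_maximal (S : P -> Prop) n (xs : 'I_n -> P) :
  (forall q, S q -> exists i, S (xs i) /\ (q <= xs i)%O) -> (exists q, S q) ->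
  exists p, wb_maximal S p.
Proof.
move=> above /(@bounded_below_minimal _ P^d _ _ _ above)[p Sp p_max].
by exists p; split=> // x Sx /way_below_le; apply: p_max.
Qed.

End MinimalPoints.

Theorem mainTheorem16 (d : Order.disp_t) (P : porderType d) (R : comPzRingType)
  (HP : @continuous_poset d P) (Hirr : forall p : P, ~ way_below p p)
  (M : pmod P R) :
  ((exists p, wb_minimal (supp M) p) -> ~ lower_sc M) /\
  ((exists p, wb_maximal (supp M) p) -> ~ upper_sc M) /\
  (fin_gen M -> nonzero_pmod M -> ~ lower_sc M) /\
  (fin_cogen M -> nonzero_pmod M -> ~ upper_sc M).
Proof.
split; [|split; [|split]].
- by case=> p; apply: wb_minimal_not_lower_sc.
- by case=> p; apply: wb_maximal_not_upper_sc.
- move=> /fin_gen_supp[n [xs below]] /(bounded_below_wb_minimal below)[p p_min].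
  exact: wb_minimal_not_lower_sc p_min.
- move=> /fin_cogen_supp[n [xs above]] /(bounded_above_wb_maximal above)[p p_max].
  exact: wb_maximal_not_upper_sc p_max.
Qed.
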